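(* Let $G$ be a finite, simple, connected $(q+1)$-regular graph with $q\ge 1$, with $n$ vertices and $m$ edges, let $a\in[0,1]$ and $b\in\mathbb R$, and let $\tilde{\mathbf U}$ be the generalized Grover matrix of $G$ with parameters $a,b$. Set $\eta=(1-q)a+b(q+1)$ and $\sigma=b((1-q)a+bq)$. Then the $2m$ eigenvalues of $\tilde{\mathbf U}$ (counted with multiplicity) are: the $2n$ values \[ \lambda=\frac{\mu\eta\pm\sqrt{\mu^2\eta^2-4\sigma}}{2}, \] where $\mu$ runs over the eigenvalues of $\mathbf P(G)$ (with multiplicity), and the $2(m-n)$ values $b$ and $-b$, each with multiplicity $m-n$.
   Context: $D(G)$ is the set of $2m$ arcs of $G$ (for each edge $uv$, both $(u,v)$ and $(v,u)$); for $e=(u,v)$, $o(e)=u$, $t(e)=v$, $e^{-1}=(v,u)$, and $d_v=\deg v$. The generalized Grover matrix $\tilde{\mathbf U}=(\tilde U_{ef})_{e,f\in D(G)}$ has $\tilde U_{ef}=(2/d_{t(f)}-1)a+b$ if $t(f)=o(e)$ and $f\ne e^{-1}$; $\tilde U_{ef}=(2/d_{t(f)}-1)a$ if $f=e^{-1}$; $0$ otherwise. $\mathbf P(G)$ has entries $P_{uv}=1/\deg u$ if $u,v$ adjacent and $0$ otherwise. *)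

From HB Require Import structures.
From mathcomp Require Import all_boot all_order all_algebra.
From mathcomp Require Import complex.
Set Implicit Arguments. Unset Strict Implicit. Unset Printing Implicit Defensive.
Import Order.TTheory GRing.Theory Num.Theory.
Local Open Scope ring_scope.

(* A finite simple graph: vertex type T : finType, adjacency e : rel T,
   assumed symmetric and irreflexive in the theorem. *)

Definition arcs (T : finType) (e : rel T) : {set T * T} :=
  [set p : T * T | e p.1 p.2].

Definition deg (T : finType) (e : rel T) (v : T) : nat := #|[set w | e v w]|.

Definition nedges (T : finType) (e : rel T) : nat := #|arcs e| %/ 2.

Definition connected_graph (T : finType) (e : rel T) : Prop :=
  forall x y : T, connect e x y.

Definition grover_entry (R : fieldType) (T : finType) (e : rel T) (a b : R)
    (ee f : T * T) : R :=
  let o := fun p : T * T => p.1 in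
  let t := fun p : T * T => p.2 in
  let inv := fun p : T * T => (p.2, p.1) in
  if t f == o ee then
    if f == inv ee then (2 / (deg e (t f))%:R - 1) * a
    else (2 / (deg e (t f))%:R - 1) * a + b
  else 0.

Definition grover_mx (R : fieldType) (T : finType) (e : rel T) (a b : R)
  : 'M[R]_#|arcs e| :=
  \matrix_(i, j) grover_entry e a b (enum_val i) (enum_val j).

Definition trans_mx (R : fieldType) (T : finType) (e : rel T) : 'M[R]_#|T| :=
  \matrix_(i, j) (if e (enum_val i) (enum_val j)
                  then ((deg e (enum_val i))%:R)^-1 else 0).

(* Write K and L for the arc-tail and arc-head incidence matrices, J for the
   arc-reversal involution and A for the adjacency matrix of the (q+1)-regular
   graph G.  Entrywise, the Grover matrix is U = c K L^T - b J with
   c = (2/(q+1) - 1) a + b.  As J^2 = 1, Y = X - bJ satisfies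
   Y (X + bJ) = (X^2 - b^2) I, and det Y = (X^2 - b^2)^m.  Multiplying X - U
   by Y and applying Sylvester's determinant identity replaces the 2m x 2m
   matrix Y K L^T by the n x n matrix L^T Y K = X A - b (q+1) I, so that
     char U = (X^2 - b^2)^(m-n) det((X^2 + sigma) I - eta X P).
   Splitting the last determinant over the eigenvalues mu of P and solving
   each quadratic X^2 - mu eta X + sigma gives the eigenvalues. *)

From HB Require Import structures.
From mathcomp Require Import all_boot all_order all_algebra.
From mathcomp Require Import complex.
From mathcomp Require Import ring zify.
Set Implicit Arguments. Unset Strict Implicit. Unset Printing Implicit Defensive.
Import Order.TTheory GRing.Theory Num.Theory.
Local Open Scope ring_scope.

(* Sylvester's identity, from the two block eliminations of [[t, A], [B, 1]]. *)
Lemma det_sub_mulmxC (R : comNzRingType) m n (A : 'M[R]_(m, n)) (B : 'M[R]_(n, m))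
    (t : R) :
  t ^+ n * \det (t%:M - A *m B) = t ^+ m * \det (t%:M - B *m A).
Proof.
pose M := block_mx (t%:M : 'M_m) A B 1%:M.
have detM : \det M = \det (t%:M - A *m B).
  have: M *m block_mx 1%:M 0 (- B) 1%:M = block_mx (t%:M - A *m B) A 0 1%:M.
    by rewrite mulmx_block !mulmx1 !mulmx0 !mul1mx !mulmxN !add0r subrr.
  move/(congr1 determinant).
  by rewrite det_mulmx det_lblock det_ublock !det_scalar !expr1n !mulr1.
have: block_mx 1%:M 0 (- B) t%:M *m M = block_mx t%:M A 0 (t%:M - B *m A).
  rewrite mulmx_block !mul1mx !mul0mx !addr0 !mulNmx mulmx1.
  by rewrite scalar_mxC addNr addrC.
move/(congr1 determinant).
by rewrite det_mulmx det_lblock !det_ublock !det_scalar expr1n mul1r detM mulrC.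
Qed.

Lemma mul_scalar_sub_add_invol (R : comNzRingType) n (J : 'M[R]_n) (x b : R) :
  J *m J = 1%:M -> (x%:M - b *: J) *m (x%:M + b *: J) = (x ^+ 2 - b ^+ 2)%:M.
Proof.
move=> JJ; rewrite mulmxDr !mulmxBl -!scalemxAr -!scalemxAl JJ !mul_scalar_mx.
by rewrite mul_mx_scalar addrA subrK !scale_scalar_mx mulr1 -!expr2 raddfB.
Qed.

Lemma mul_tr_rowsub1 (R : pzSemiRingType) m n p (f : 'I_m -> 'I_n) (g : 'I_m -> 'I_p) :
  (rowsub f 1%:M)^T *m rowsub g 1%:M
  = \matrix_(u, v) #|[pred i | (f i == u) && (g i == v)]|%:R :> 'M[R]_(n, p).
Proof.
apply/matrixP => u v; rewrite !mxE -sum1_card natr_sum [RHS]big_mkcond /=.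
by apply: eq_bigr => i _; rewrite !mxE -natrM mulnb inE; case: (_ && _).
Qed.

Lemma poly_eq_horner (R : numDomainType) (p q : {poly R}) :
  (forall z, p.[z] = q.[z]) -> p = q.
Proof.
move=> pq; apply/eqP; rewrite -subr_eq0; apply/eqP.
apply: (@roots_geq_poly_eq0 _ _ [seq i%:R | i <- iota 0 (size (p - q))]).
- by apply/allP => _ /mapP[i _ ->]; rewrite /root hornerD hornerN pq subrr.
- by rewrite map_inj_uniq ?iota_uniq // => i j /eqP; rewrite eqr_nat => /eqP.
- by rewrite size_map size_iota.
Qed.

Lemma horner_char_poly (R : comNzRingType) n (A : 'M[R]_n) (y : R) :
  (char_poly A).[y] = \det (y%:M - A).
Proof.
rewrite /char_poly -horner_evalE -det_map_mx; congr (\det _).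
by apply/matrixP => i j; rewrite !mxE /= horner_evalE hornerD hornerN hornerMn hornerX hornerC.
Qed.

Lemma det_sub_scale (F : fieldType) n (P : 'M[F]_n) (mus : seq F) (s c : F) :
  char_poly P = \prod_(mu <- mus) ('X - mu%:P) ->
  \det (s%:M - c *: P) = \prod_(mu <- mus) (s - c * mu).
Proof.
move=> hP; have prod_const x : \prod_(mu <- mus) x = x ^+ n.
  have := size_char_poly P; rewrite hP size_prod_XsubC => -[<-].
  by rewrite big_const_seq count_predT iter_mulr_1.
have [-> | c0] := eqVneq c 0.
  rewrite scale0r subr0 det_scalar -prod_const.
  by apply: eq_bigr => mu _; rewrite mul0r subr0.
have -> : s%:M - c *: P = c *: ((s / c)%:M - P).
  by rewrite scalerBr scale_scalar_mx mulrC divfK.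
rewrite detZ -horner_char_poly hP horner_prod -prod_const -big_split /=.
by apply: eq_bigr => mu _; rewrite hornerXsubC mulrBr mulrC divfK.
Qed.

Lemma det_sub_scale_polyC (F : numFieldType) n (P : 'M[F]_n) (mus : seq F)
    (s c : {poly F}) :
  char_poly P = \prod_(mu <- mus) ('X - mu%:P) ->
  \det (s%:M - c *: map_mx polyC P) = \prod_(mu <- mus) (s - c * mu%:P).
Proof.
move=> hP; apply: poly_eq_horner => z.
rewrite horner_prod -horner_evalE -det_map_mx.
have -> : map_mx (horner_eval z) (s%:M - c *: map_mx polyC P) = s.[z]%:M - c.[z] *: P.
  apply/matrixP => i j; rewrite !mxE /= !horner_evalE.
  by rewrite hornerD hornerN hornerMn hornerM hornerC.
rewrite (det_sub_scale _ _ hP); apply: eq_bigr => mu _.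
by rewrite !hornerE.
Qed.

Lemma mul_XsubC_XsubC (R : comNzRingType) (x y : R) :
  ('X - x%:P) * ('X - y%:P) = 'X^2 - (x + y)%:P * 'X + (x * y)%:P.
Proof. by rewrite polyCD polyCM; ring. Qed.

Lemma mul_XsubC_sqrtC (C : numClosedFieldType) (B D : C) :
  let r := sqrtC (B ^+ 2 - 4 * D) in
  ('X - ((B + r) / 2)%:P) * ('X - ((B - r) / 2)%:P) = 'X^2 - B%:P * 'X + D%:P.
Proof.
move=> r; have r2 : r ^+ 2 = B ^+ 2 - 4 * D by exact: sqrtCK.
have two_neq0 : (2 : C) != 0 by rewrite pnatr_eq0.
rewrite mul_XsubC_XsubC; congr ('X^2 - _%:P * 'X + _%:P); first by field.
have -> : (B + r) / 2 * ((B - r) / 2) = (B ^+ 2 - r ^+ 2) / 4 by field.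
by rewrite r2; field.
Qed.

Notation rev_arc p := (p.2, p.1).

Section Arcs.
Variables (T : finType) (e : rel T).
Hypotheses (e_sym : symmetric e) (e_irr : irreflexive e).
Local Notation N := #|arcs e|.

Lemma rev_arc_in p : (rev_arc p \in arcs e) = (p \in arcs e).
Proof. by rewrite !inE e_sym. Qed.

Lemma card_arcs_to y : #|[set p in arcs e | p.2 == y]| = deg e y.
Proof.
have pair_inj : injective (fun w : T => (w, y)) by move=> w w' [->].
rewrite /deg -(card_imset _ pair_inj).
apply: eq_card => -[x y']; rewrite !inE /=.
apply/andP/imsetP => [[exy /eqP<-] | [w + [-> ->]]].
  by exists x; rewrite // inE e_sym.
by rewrite inE e_sym eqxx => ->.
Qed.

Lemma card_arcs_regular d : (forall v, deg e v = d) -> N = (#|T| * d)%N.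
Proof.
move=> e_reg; rewrite -sum1_card (partition_big snd predT) //=.
under eq_bigr => y _ do rewrite sum1dep_card card_arcs_to e_reg.
by rewrite sum_nat_const.
Qed.

Definition pos_arcs : {set T * T} :=
  [set p in arcs e | enum_rank p.1 < enum_rank p.2]%N.

Lemma rev_arc_pos p : p \in arcs e -> (rev_arc p \in pos_arcs) = (p \notin pos_arcs).
Proof.
rewrite !inE /= e_sym => ep; rewrite ep /=.
have: enum_rank p.1 != enum_rank p.2.
  by rewrite (inj_eq enum_rank_inj); apply: contraTneq ep => ->; rewrite e_irr.
by rewrite neq_ltn -leqNgt; case: ltngtP.
Qed.

Lemma card_arcs_double : N = (nedges e).*2.
Proof.
have rev_arcK : involutive (fun p : T * T => rev_arc p) by case.
have pos_sub : pos_arcs \subset arcs e by apply/subsetP => p; rewrite inE => /andP[].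
have card_pos : N = (#|pos_arcs|).*2.
  rewrite -addnn -{1}(cardsID pos_arcs (arcs e)) (setIidPr pos_sub); congr addn.
  rewrite -(card_preimset _ (inv_inj rev_arcK)); apply: eq_card => p.
  rewrite inE in_setD rev_arc_in; case ep: (p \in arcs e).
    by rewrite rev_arc_pos // negbK andbT.
  by rewrite andbC; apply: esym; apply: (contraFF _ ep); apply: (subsetP pos_sub).
by rewrite /nedges card_pos -muln2 mulnK // muln2.
Qed.

Lemma card_enum_arcs (P : pred (T * T)) :
  #|[pred i : 'I_N | P (enum_val i)]| = #|[set p in arcs e | P p]|.
Proof.
rewrite -sum1dep_card (big_enum_val_cond P (fun=> 1%N)) sum1dep_card.
by apply: eq_card => i; rewrite !inE.
Qed.

Lemma card_enum_arcs_eq p : #|[pred i : 'I_N | enum_val i == p]| = (p \in arcs e).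
Proof.
rewrite (card_enum_arcs (pred1 p)); case: (boolP (p \in arcs e)) => pA /=.
  rewrite -(cards1 p); apply: eq_card => x; rewrite !inE andbC.
  by case: eqP => // ->; move: pA; rewrite inE.
apply: eq_card0 => x; rewrite !inE andbC.
by case: eqP => // ->; apply/negbTE; move: pA; rewrite inE.
Qed.

Definition arc_tail (i : 'I_N) : 'I_#|T| := enum_rank (enum_val i).1.
Definition arc_head (i : 'I_N) : 'I_#|T| := enum_rank (enum_val i).2.
Definition arc_rev (i : 'I_N) : 'I_N := enum_rank_in (enum_valP i) (rev_arc (enum_val i)).

Lemma enum_val_arc_rev i : enum_val (arc_rev i) = rev_arc (enum_val i).
Proof. by rewrite enum_rankK_in // rev_arc_in enum_valP. Qed.

Lemma arc_revK : involutive arc_rev.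
Proof. by move=> i; apply: enum_val_inj; rewrite !enum_val_arc_rev; case: (enum_val i). Qed.

Lemma arc_tail_rev i : arc_tail (arc_rev i) = arc_head i.
Proof. by rewrite /arc_tail enum_val_arc_rev. Qed.

Lemma enum_rank_eq (x : T) (u : 'I_#|T|) : (enum_rank x == u) = (x == enum_val u).
Proof. by rewrite -(inj_eq enum_val_inj) enum_rankK. Qed.

Section IncidenceMatrices.
Variable R : pzRingType.

Definition tail_mx : 'M[R]_(N, #|T|) := rowsub arc_tail 1%:M.
Definition head_mx : 'M[R]_(N, #|T|) := rowsub arc_head 1%:M.
Definition rev_mx : 'M[R]_N := rowsub arc_rev 1%:M.
Definition adj_mx : 'M[R]_#|T| := \matrix_(u, v) (e (enum_val u) (enum_val v))%:R.
Definition orient_mx : 'M[R]_N := diag_mx (\row_i (-1) ^+ (enum_val i \notin pos_arcs)).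

Lemma rev_mxE : rev_mx = \matrix_(i, j) (enum_val j == rev_arc (enum_val i))%:R.
Proof.
by apply/matrixP => i j; rewrite !mxE -(inj_eq enum_val_inj) enum_val_arc_rev eq_sym.
Qed.

Lemma rev_mx_tail : rev_mx *m tail_mx = head_mx.
Proof.
rewrite mul_rowsub_mx mul1mx -rowsub_comp.
by apply: eq_rowsub => i; rewrite /= arc_tail_rev.
Qed.

Lemma rev_mx_sqr : rev_mx *m rev_mx = 1%:M.
Proof.
rewrite mul_rowsub_mx mul1mx -rowsub_comp (eq_rowsub _ arc_revK).
by apply/matrixP => i j; rewrite !mxE.
Qed.

Lemma tr_head_tail : head_mx^T *m tail_mx = adj_mx.
Proof.
rewrite mul_tr_rowsub1; apply/matrixP => u v; rewrite !mxE.
have := card_enum_arcs_eq (enum_val v, enum_val u); rewrite inE /= e_sym => <-.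
congr (_%:R); apply: eq_card => i; rewrite !inE /arc_head /arc_tail !enum_rank_eq.
by case: (enum_val i) => x y; rewrite xpair_eqE andbC.
Qed.

Lemma tr_head_head d : (forall v, deg e v = d) -> head_mx^T *m head_mx = d%:R%:M.
Proof.
move=> e_reg; rewrite mul_tr_rowsub1; apply/matrixP => u v; rewrite !mxE.
have [<- | neq_uv] := eqVneq u v.
  rewrite mulr1n -(e_reg (enum_val u)) -card_arcs_to.
  rewrite -(card_enum_arcs (fun p => p.2 == enum_val u)); congr (_%:R).
  by apply: eq_card => i; rewrite !inE andbb /arc_head enum_rank_eq.
suff -> : #|[pred i | (arc_head i == u) && (arc_head i == v)]| = 0%N by [].
by apply: eq_card0 => i; rewrite !inE; apply: contraNF neq_uv => /andP[/eqP<-].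
Qed.

Lemma tail_mul_tr_head :
  tail_mx *m head_mx^T = \matrix_(i, j) ((enum_val j).2 == (enum_val i).1)%:R.
Proof.
apply/matrixP => i j; rewrite mul_rowsub_mx mul1mx !mxE /arc_head /arc_tail.
by rewrite (inj_eq enum_rank_inj) eq_sym.
Qed.

Lemma orient_mx_sqr : orient_mx *m orient_mx = 1%:M.
Proof.
rewrite mulmx_diag -diag_const_mx; congr diag_mx; apply/rowP => i.
by rewrite !mxE -expr2 sqrr_sign.
Qed.

Lemma orient_rev_mx : orient_mx *m rev_mx *m orient_mx = - rev_mx.
Proof.
rewrite mul_diag_mx mul_mx_diag; apply/matrixP => i j; rewrite !mxE.
have [<- | _] := eqVneq (arc_rev i) j; last by rewrite mulr0 mul0r oppr0.
rewrite enum_val_arc_rev rev_arc_pos ?enum_valP // mulr1.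
by case: (enum_val i \in pos_arcs); rewrite /= ?mulr1 ?mul1r.
Qed.

End IncidenceMatrices.

Lemma map_adj_mx (R R' : pzRingType) (f : {rmorphism R -> R'}) :
  map_mx f (adj_mx R) = adj_mx R'.
Proof. by apply/matrixP => u v; rewrite !mxE rmorph_nat. Qed.

Lemma map_rev_mx (R R' : pzRingType) (f : {rmorphism R -> R'}) :
  map_mx f (rev_mx R) = rev_mx R'.
Proof. by rewrite map_mxsub map_mx1. Qed.

End Arcs.

Section Grover.
Variables (F : fieldType) (T : finType) (e : rel T) (d : nat).
Hypotheses (e_sym : symmetric e) (e_irr : irreflexive e) (e_reg : forall v, deg e v = d).

Lemma map_grover_mx_incidence (R : pzRingType) (f : {rmorphism F -> R}) (a b : F) :
  map_mx f (grover_mx e a b)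
  = f ((2 / d%:R - 1) * a + b) *: (tail_mx e R *m (head_mx e R)^T) - f b *: rev_mx e R.
Proof.
rewrite tail_mul_tr_head rev_mxE //; apply/matrixP => i j.
rewrite !mxE /grover_entry /= e_reg.
have [-> | _] := eqVneq (enum_val j) (rev_arc (enum_val i)).
  by rewrite eqxx !mulr1 rmorphD addrK.
by case: eqP; rewrite ?rmorph0 !mulr0 ?mulr1 subr0.
Qed.

(* Conjugation by orient_mx turns X - bJ into X + bJ, and the product of the
   two is (X^2 - b^2) I.  Of the two square roots of (X^2 - b^2)^(2m), the
   determinant is the monic one; in characteristic 2 both roots coincide. *)
Lemma det_X_sub_rev_mx (b : F) :
  \det ('X%:M - b%:P *: rev_mx e {poly F}) = ('X^2 - (b ^+ 2)%:P) ^+ nedges e.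
Proof.
set J := rev_mx e _; set D := orient_mx e {poly F}; set p := \det _.
have t_monic : 'X^2 - (b ^+ 2)%:P \is monic by rewrite monicXnsubC.
have p_monic : p \is monic.
  by rewrite /p /J -(map_rev_mx _ polyC) -map_mxZ; exact: char_poly_monic.
have p_opp : \det ('X%:M + b%:P *: J) = p.
  have <- : D *m ('X%:M - b%:P *: J) *m D = 'X%:M + b%:P *: J.
    rewrite mulmxBr mulmxBl mul_mx_scalar -scalemxAl orient_mx_sqr scalemx1.
    by rewrite -scalemxAr -scalemxAl orient_rev_mx // scalerN opprK.
  by rewrite !det_mulmx mulrAC -det_mulmx orient_mx_sqr det1 mul1r.
have : p ^+ 2 == (('X^2 - (b ^+ 2)%:P) ^+ nedges e) ^+ 2.
  rewrite expr2 -{2}p_opp -det_mulmx mul_scalar_sub_add_invol ?rev_mx_sqr //.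
  by rewrite det_scalar -exprM muln2 -card_arcs_double // -polyC_exp.
rewrite eqf_sqr => /orP[/eqP // | /eqP p_neg].
have neg1 : (-1 : F) = 1.
  by rewrite -{2}(monicP p_monic) p_neg lead_coefN (monicP (monic_exp _ t_monic)).
by rewrite p_neg -scaleN1r neg1 scale1r.
Qed.

Lemma char_poly_grover_mul (a b : F) :
  let c := (2 / d%:R - 1) * a + b in
  let t := 'X^2 - (b ^+ 2)%:P in
  t ^+ #|T| * char_poly (grover_mx e a b)
  = t ^+ nedges e * \det (t%:M - c%:P *: ('X *: adj_mx e _ - (b *+ d)%:P%:M)).
Proof.
move=> c t.
set K := tail_mx e {poly F}; set L := head_mx e {poly F}; set J := rev_mx e {poly F}.
set Y := 'X%:M - b%:P *: J.
have Y_grover : Y *m char_poly_mx (grover_mx e a b) = t%:M - (c%:P *: (Y *m K)) *m L^T.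
  rewrite /char_poly_mx (map_grover_mx_incidence polyC) opprB addrA mulmxBr.
  by rewrite mul_scalar_sub_add_invol ?rev_mx_sqr // -polyC_exp -scalemxAl -scalemxAr mulmxA.
have LYK : L^T *m (Y *m K) = 'X *: adj_mx e _ - (b *+ d)%:P%:M.
  rewrite mulmxBl -scalemxAl rev_mx_tail // mul_scalar_mx mulmxBr -!scalemxAr.
  by rewrite tr_head_tail // (tr_head_head _ _ e_reg) // scale_scalar_mx polyCMn mulr_natr.
have := det_sub_mulmxC (c%:P *: (Y *m K)) L^T t.
rewrite -Y_grover det_mulmx det_X_sub_rev_mx -scalemxAr LYK => sylvester.
rewrite [X in _ = t ^+ X * _](card_arcs_double e_sym e_irr) -addnn exprD in sylvester.
have tm_neq0 : t ^+ nedges e != 0 by rewrite expf_neq0 // monic_neq0 // monicXnsubC.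
by apply: (mulfI tm_neq0); rewrite mulrCA sylvester mulrA.
Qed.

End Grover.

Section FieldMorphism.
Variables (F K : fieldType) (f : {rmorphism F -> K}) (T : finType) (e : rel T).

Lemma map_grover_mx (a b : F) : map_mx f (grover_mx e a b) = grover_mx e (f a) (f b).
Proof.
apply/matrixP => i j; rewrite !mxE /grover_entry.
case: ifP => _; [case: ifP => _ |]; rewrite ?rmorph0 //.
  by rewrite rmorphM rmorphB fmorph_div rmorph1 !rmorph_nat.
by rewrite rmorphD rmorphM rmorphB fmorph_div rmorph1 !rmorph_nat.
Qed.

Lemma map_trans_mx : map_mx f (trans_mx F e) = trans_mx K e.
Proof.
apply/matrixP => u v; rewrite !mxE.
by case: ifP => _; rewrite ?rmorph0 // fmorphV rmorph_nat.
Qed.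

End FieldMorphism.

Lemma adj_mx_regular (F : fieldType) (T : finType) (e : rel T) d :
  (forall v, deg e v = d) -> d%:R != 0 :> F -> adj_mx e F = d%:R *: trans_mx F e.
Proof.
move=> e_reg d0; apply/matrixP => u v; rewrite !mxE e_reg.
by case: (e _ _); rewrite ?mulr0 // divff.
Qed.

Lemma char_poly_grover (F : numFieldType) (T : finType) (e : rel T) (q : nat) (a b : F)
    (mus : seq F) :
  symmetric e -> irreflexive e -> (forall v, deg e v = q.+1) -> (1 <= q)%N ->
  char_poly (trans_mx F e) = \prod_(mu <- mus) ('X - mu%:P) ->
  let eta := (1 - q%:R) * a + b * (q%:R + 1) in
  let sigma := b * ((1 - q%:R) * a + b * q%:R) in
  char_poly (grover_mx e a b)
  = (('X - b%:P) * ('X + b%:P)) ^+ (nedges e - #|T|)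
    * \prod_(mu <- mus) ('X^2 - (mu * eta)%:P * 'X + sigma%:P).
Proof.
move=> e_sym e_irr e_reg q_gt0 char_trans eta sigma.
have d_neq0 : q.+1%:R != 0 :> F by rewrite pnatr_eq0.
set c := (2 / q.+1%:R - 1) * a + b.
have eta_c : eta = c * q.+1%:R by rewrite /eta /c -natr1; field; rewrite addrC natr1.
have sigma_c : sigma = c * b *+ q.+1 - b ^+ 2.
  by rewrite /sigma /c -mulr_natr -natr1; field; rewrite addrC natr1.
have := char_poly_grover_mul e_sym e_irr e_reg a b; rewrite -/c.
set t := 'X^2 - (b ^+ 2)%:P.
have reduced_mx : t%:M - c%:P *: ('X *: adj_mx e _ - (b *+ q.+1)%:P%:M)
          = ('X^2 + sigma%:P)%:M - (eta%:P * 'X) *: map_mx polyC (trans_mx F e).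
  rewrite -(map_adj_mx e polyC) (adj_mx_regular e_reg d_neq0) map_mxZ scalerBr !scalerA.
  have -> : c%:P * 'X * (q.+1%:R)%:P = eta%:P * 'X by rewrite eta_c polyCM mulrAC.
  rewrite scale_scalar_mx opprB addrA -raddfD /t sigma_c; congr (_%:M - _).
  by rewrite -polyCM mulrnAr polyCB addrA addrAC.
move=> /=; rewrite reduced_mx (det_sub_scale_polyC _ _ char_trans) => sylvester.
have n_le_m : (#|T| <= nedges e)%N.
  have := card_arcs_regular e_sym e_reg; rewrite (card_arcs_double e_sym e_irr); nia.
have t_neq0 : t ^+ #|T| != 0 by rewrite expf_neq0 // monic_neq0 // monicXnsubC.
have t_eq : ('X - b%:P) * ('X + b%:P) = t by rewrite -subr_sqr -polyC_exp.
apply: (mulfI t_neq0); rewrite sylvester t_eq mulrA -exprD subnKC //.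
by congr (_ * _); apply: eq_bigr => mu _; rewrite polyCM; ring.
Qed.

Theorem corollary4 (R : rcfType) (T : finType) (e : rel T) (q : nat) (a b : R)
  (e_sym : symmetric e) (e_irr : irreflexive e)
  (e_conn : connected_graph e)
  (e_reg : forall v : T, deg e v = q.+1)
  (hq : (1 <= q)%N)
  (ha : 0 <= a <= 1)
  (mus : seq R[i])
  (hmus : char_poly (map_mx (real_complex R) (trans_mx R e))
          = \prod_(mu <- mus) ('X - mu%:P)) :
  let eta : R := (1 - q%:R) * a + b * (q%:R + 1) in
  let sigma : R := b * ((1 - q%:R) * a + b * q%:R) in
  let lam_p := fun mu : R[i] =>
     (mu * real_complex R eta + sqrtC (mu ^+ 2 * (real_complex R eta) ^+ 2 - 4 * real_complex R sigma)) / 2 in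
  let lam_m := fun mu : R[i] =>
     (mu * real_complex R eta - sqrtC (mu ^+ 2 * (real_complex R eta) ^+ 2 - 4 * real_complex R sigma)) / 2 in
  char_poly (map_mx (real_complex R) (grover_mx e a b))
  = \prod_(mu <- mus) (('X - (lam_p mu)%:P) * ('X - (lam_m mu)%:P))
    * ('X - (real_complex R b)%:P) ^+ (nedges e - #|T|)
    * ('X - (- real_complex R b)%:P) ^+ (nedges e - #|T|).
Proof.
move=> eta sigma lam_p lam_m.
rewrite map_trans_mx in hmus.
rewrite map_grover_mx (char_poly_grover _ _ e_sym e_irr e_reg hq hmus) /=.
have -> : (1 - q%:R) * real_complex R a + real_complex R b * (q%:R + 1) = real_complex R eta.
  by rewrite /eta rmorphD !rmorphM rmorphB rmorphD rmorph1 !rmorph_nat.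
have -> : real_complex R b * ((1 - q%:R) * real_complex R a + real_complex R b * q%:R)
          = real_complex R sigma.
  by rewrite /sigma !rmorphM rmorphD !rmorphM rmorphB rmorph1 !rmorph_nat.
rewrite polyCN opprK -mulrA -exprMn mulrC; congr (_ * _); apply: eq_bigr => mu _.
by rewrite /lam_p /lam_m -exprMn mul_XsubC_sqrtC.
Qed.
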